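(* Under the TLT diffusion model, the conditional intertwined influence function is monotone: for every target product $p^j$, every fixed choice of seed sets $\mathcal{S}^{-j}$ of the other products, every $\mathcal{T}\subseteq\mathcal{V}$ and every $u\in\mathcal{V}\setminus\mathcal{T}$, $I(\mathcal{T}\cup\{u\}\mid\mathcal{S}^{-j})\ge I(\mathcal{T}\mid\mathcal{S}^{-j})$.
   Context: Let $G=(\mathcal{V},\mathcal{E})$ be a directed social network (an edge $(v,u)$ means $v$ can influence $u$) and $\mathcal{P}=\{p^1,\dots,p^n\}$ a set of products. For each product $p^l$ and ordered pair of users $(v,u)$ there is an influence weight $w^l_{v,u}\ge 0$ ($w^l_{v,u}=0$ if $(v,u)\notin\mathcal{E}$). Each user $u_i$ has, for each product $p^l$, an initial threshold $\theta^l_i$, drawn independently and uniformly at random from $[0,1]$. For each user $u_i$ and ordered pair of distinct products $(p^l,p^j)$ a threshold updating coefficient $\phi_i^{l\to j}>0$ is given. TLT diffusion: each product $p^l$ has a seed set $\mathcal{S}^l$; at step $0$ exactly the users of $\mathcal{S}^l$ are active for $p^l$. At each step $t\ge1$, active users stay active, and a user $u_i$ not active for $p^l$ becomes active for $p^l$ if $\sum_{v\text{ active for }p^l\text{ at end of step }t-1} w^l_{v,u_i}\ge \theta^l_i\prod_{p^m\in A_i}\phi_i^{m\to l}$, where $A_i$ is the set of products other than $p^l$ for which $u_i$ is active at the end of step $t-1$. The process runs until nothing changes. Conditional intertwined influence function $I(\mathcal{S}^j\mid\mathcal{S}^{-j})$, where $\mathcal{S}^{-j}$ lists the seed sets of all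 products other than $p^j$: first the products other than $p^j$ diffuse under TLT from $\mathcal{S}^{-j}$ until termination; then each user $u_i$'s threshold for $p^j$ is set to $\theta^j_i\prod_{p^m\in A_i}\phi_i^{m\to j}$, with $A_i$ the set of other products for which $u_i$ ended up active, and $p^j$ diffuses from $\mathcal{S}^j$ under the linear threshold rule with these thresholds and weights $w^j$. $I(\mathcal{S}^j\mid\mathcal{S}^{-j})$ is the expected number of users active for $p^j$ at the end. *)

From HB Require Import structures.
From mathcomp Require Import all_boot all_order all_algebra.
From mathcomp Require Import all_classical all_reals all_analysis.
Set Implicit Arguments. Unset Strict Implicit. Unset Printing Implicit Defensive.
Import Order.TTheory GRing.Theory Num.Theory.
Local Open Scope ring_scope.

Section TLT.
Variables (R : realType) (V P : finType).
(* w l v u : influence weight of v on u for product l *)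
Variable w : P -> V -> V -> R.
(* phi u m l : threshold updating coefficient phi_u^{m -> l} *)
Variable phi : V -> P -> P -> R.
(* theta (l, u) : initial threshold of user u for product l *)
Variable theta : (P * V)%type -> R.

Definition others_active (act : P -> {set V}) (u : V) (l : P) : {set P} :=
  [set m | (m != l) && (u \in act m)].

Definition tlt_step (D : {set P}) (act : P -> {set V}) : P -> {set V} :=
  fun l => if l \in D then
     act l :|: [set u | theta (l, u) * \prod_(m in others_active act u l) phi u m l
                          <= \sum_(v in act l) w l v u]
   else act l.

(* Active sets only grow, so after #|P| * #|V| steps nothing changes any more:
   this is the terminal state of the process. *)
Definition tlt_final (D : {set P}) (act0 : P -> {set V}) : P -> {set V} :=
  iter (#|P| * #|V|) (tlt_step D) act0.

(* Phase 1: all products other than j diffuse from their seeds S^{-j}. *)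
Definition phase1 (j : P) (S : P -> {set V}) : P -> {set V} :=
  tlt_final [set~ j] (fun l => if l == j then finset.set0 else S l).

(* Phase 2: linear threshold diffusion of p^j with updated thresholds. *)
Definition lt_step (j : P) (thr : V -> R) (A : {set V}) : {set V} :=
  A :|: [set u | thr u <= \sum_(v in A) w j v u].

Definition lt_final (j : P) (thr : V -> R) (A0 : {set V}) : {set V} :=
  iter #|V| (lt_step j thr) A0.

Definition cond_spread (j : P) (T : {set V}) (S : P -> {set V}) : nat :=
  let act := phase1 j S in
  #|lt_final j (fun u => theta (j, u) * \prod_(m in others_active act u j) phi u m j) T|.
End TLT.

(* Expectation over thresholds drawn independently and uniformly from [0,1]:
   iterated Lebesgue integral over [0,1] in each coordinate (Fubini-Tonelli). *)
Section Expect.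
Variables (R : realType) (K : finType).
Definition upd (th : K -> R) (k : K) (x : R) : K -> R :=
  fun k' => if k' == k then x else th k'.

Fixpoint iter_int (s : seq K) (f : (K -> R) -> \bar R) (th : K -> R) : \bar R :=
  match s with
  | [::] => f th
  | k :: s' => (\int[@lebesgue_measure R]_(x in `[0%R, 1%R]%classic) iter_int s' f (upd th k x))%E
  end.

Definition uniform_expect (f : (K -> R) -> \bar R) : \bar R :=
  iter_int (enum K) f (fun _ => 0).
End Expect.

Definition cond_influence (R : realType) (V P : finType)
  (w : P -> V -> V -> R) (phi : V -> P -> P -> R)
  (j : P) (Sj : {set V}) (S : P -> {set V}) : \bar R :=
  uniform_expect (fun theta : (P * V)%type -> R =>
    ((cond_spread w phi theta j Sj S)%:R)%:E).

From HB Require Import structures.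
From mathcomp Require Import all_boot all_order all_algebra.
From mathcomp Require Import all_classical all_reals all_analysis.
Import Order.TTheory GRing.Theory Num.Theory.
Local Open Scope ring_scope.

(* Fix the thresholds.  The diffusion of the other products does not look at
   the seeds of p^j, so the updated thresholds of p^j are fixed too, and with
   nonnegative weights one linear threshold step is a monotone map on seed
   sets; hence so is its iterate, and the final number of p^j-active users is
   monotone in the seeds.  Averaging over the thresholds preserves this, since
   the Lebesgue integral is monotone on nonnegative integrands.  Neither the
   network structure nor the coefficients phi play any role. *)

Lemma sumr_subset (R : numDomainType) (V : finType) (F : V -> R) (A B : {set V}) :
  (forall v, 0 <= F v) -> A \subset B -> \sum_(v in A) F v <= \sum_(v in B) F v.
Proof.
move=> F_ge0 AB; rewrite [leRHS](big_setID A) /= (finset.setIidPr AB) lerDl.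
exact: sumr_ge0.
Qed.

Section LinearThresholdMonotone.
Variables (R : realType) (V P : finType) (w : P -> V -> V -> R).
Variables (j : P) (thr : V -> R).
Hypothesis w_ge0 : forall v u, 0 <= w j v u.

Lemma lt_step_subset (A B : {set V}) :
  A \subset B -> lt_step w j thr A \subset lt_step w j thr B.
Proof.
move=> AB; apply/fintype.subsetP => x; rewrite !inE => /orP[xA | x_reached].
  by rewrite (fintype.subsetP AB x xA).
by rewrite (le_trans x_reached) ?orbT // sumr_subset.
Qed.

Lemma lt_final_subset (A B : {set V}) :
  A \subset B -> lt_final w j thr A \subset lt_final w j thr B.
Proof.
move=> AB; rewrite /lt_final; elim: #|V| => //= n IHn.
exact: lt_step_subset.
Qed.

End LinearThresholdMonotone.

Lemma cond_spread_subset (R : realType) (V P : finType)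
    (w : P -> V -> V -> R) (phi : V -> P -> P -> R) (theta : (P * V)%type -> R)
    (j : P) (S : P -> {set V}) (T T' : {set V}) :
  (forall v u, 0 <= w j v u) -> T \subset T' ->
  (cond_spread w phi theta j T S <= cond_spread w phi theta j T' S)%N.
Proof. by move=> w_ge0 TT'; apply/subset_leq_card/lt_final_subset. Qed.

Section UniformExpectMonotone.
Local Open Scope ereal_scope.

(* No measurability is needed: the integral of a nonnegative function is the
   supremum of the integrals of the simple functions below it. *)
Lemma ge0_le_integral_nonmeas d (T : measurableType d) (R : realType)
    (mu : {measure set T -> \bar R}) (D : set T) (f g : T -> \bar R) :
  (forall x, 0 <= f x) -> (forall x, f x <= g x) ->
  \int[mu]_(x in D) f x <= \int[mu]_(x in D) g x.
Proof.
move=> f_ge0 fg.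
have g_ge0 x : 0 <= g x by exact: le_trans (f_ge0 x) (fg x).
rewrite !ge0_integralE //; apply: ereal_sup_le => _ [h /= hf <-].
by exists h => // x; apply: le_trans (hf x) _; apply: lee_restrict.
Qed.

Variables (R : realType) (K : finType).

Lemma iter_int_ge0 (s : seq K) (f : (K -> R) -> \bar R) (th : K -> R) :
  (forall t, 0 <= f t) -> 0 <= iter_int s f th.
Proof.
by move=> f_ge0; elim: s th => //= k s IHs th; apply: integral_ge0.
Qed.

Lemma le_iter_int (s : seq K) (f g : (K -> R) -> \bar R) (th : K -> R) :
  (forall t, 0 <= f t) -> (forall t, f t <= g t) ->
  iter_int s f th <= iter_int s g th.
Proof.
move=> f_ge0 fg; elim: s th => //= k s IHs th.
by apply: ge0_le_integral_nonmeas => x; [exact: iter_int_ge0 | exact: IHs].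
Qed.

Lemma le_uniform_expect (f g : (K -> R) -> \bar R) :
  (forall t, 0 <= f t) -> (forall t, f t <= g t) ->
  uniform_expect f <= uniform_expect g.
Proof. exact: le_iter_int. Qed.

End UniformExpectMonotone.

Theorem theorem2 (R : realType) (V P : finType) (E : rel V)
  (w : P -> V -> V -> R) (phi : V -> P -> P -> R)
  (hw_ge0 : forall l v u, 0 <= w l v u)
  (hw_edge : forall l v u, ~~ E v u -> w l v u = 0)
  (hphi : forall u l m, l != m -> 0 < phi u l m)
  (j : P) (S : P -> {set V}) (T : {set V}) (u : V) (hu : u \notin T) :
  (cond_influence w phi j T S <= cond_influence w phi j (u |: T) S)%E.
Proof.
apply: le_uniform_expect => theta; first by rewrite lee_fin.
rewrite lee_fin ler_nat.
exact/cond_spread_subset/finset.subsetUr.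
Qed.
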